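(* Under the setting of the context, let $\mathbf e=e_1+\dots+e_d$. There exists a constant $C$, depending only on $E$, $P$ and $p$, such that for all $m\ge1$ and all integers $1\le n\le p\le q$, $$|R_q-R_n|^2+2\sum_{k=p}^{q-1}\langle m\mathbf e-R_n,(h-g)^-(\xi_k,R_k/m)\rangle+2\sum_{k=p}^{q-1}\langle R_n,(h-g)^+(\xi_k,R_k/m)\rangle\le|R_p-R_n|^2+C(q-p+m)+2\sum_{k=p}^{q-1}\langle R_k-R_n,Z_{k+1}\rangle.$$
   Context: Let $d\ge1$, $(e_1,\dots,e_d)$ the canonical basis, $\mathcal V=\{\pm e_1,\dots,\pm e_d\}$. Let $E$ be a finite set and $P$ an irreducible and aperiodic stochastic matrix on $E$ with unique invariant probability $\mu$. For $k\in E$, $y\in\mathbb R^d$, $p(k,y,\cdot)$ is a probability on $\mathcal V$, with $y\mapsto p(k,y,u)$ twice continuously differentiable with bounded derivatives. Let $g(k,y)=\sum_uu\,p(k,y,u)$, assumed to satisfy $\sum_k\mu(k)g(k,y)=0$ for all $y$, and $v(i,y)=\sum_{n\ge0}\sum_jP^n(i,j)g(j,y)$. Reflected kernel: for $k\in E$, $y\in[0,1]^d$, $\ell\le d$: if $0<y_\ell<1$, $q(k,y,\pm e_\ell)=p(k,y,\pm e_\ell)$; if $y_\ell=1$, $q(k,y,e_\ell)=0$, $q(k,y,-e_\ell)=p(k,y,e_\ell)+p(k,y,-e_\ell)$; if $y_\ell=0$, $q(k,y,-e_\ell)=0$, $q(k,y,e_\ell)=p(k,y,e_\ell)+p(k,y,-e_\ell)$;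 $h(k,y)=\sum_uu\,q(k,y,u)$; $c^{(m)}(i,y)=\sum_uq(i,y,u)[(v-g)(i,y+u/m)-(v-g)(i,y)]$. For $m\ge1$, $(\xi_n,R_n)_{n\ge0}$ is a Markov chain on $E\times\{0,\dots,m\}^d$ with $R_0=0$ and $\mathbb P(\xi_{n+1}=k,R_{n+1}=R_n+u\mid\xi_0,\dots,\xi_n,R_0,\dots,R_n)=P(\xi_n,k)q(\xi_n,R_n/m,u)$. $Z_{n+1}=R_{n+1}+v(\xi_{n+1},R_{n+1}/m)-[R_n+v(\xi_n,R_n/m)+(h-g)(\xi_n,R_n/m)+c^{(m)}(\xi_n,R_n/m)]$. For a vector $w$, $w^+$ and $w^-$ denote the coordinatewise positive and negative parts (so $w=w^+-w^-$, both with nonnegative entries). *)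

From HB Require Import structures.
From mathcomp Require Import all_boot all_order all_algebra.
From mathcomp Require Import all_classical all_reals all_analysis.
Set Implicit Arguments. Unset Strict Implicit. Unset Printing Implicit Defensive.
Import Order.TTheory GRing.Theory Num.Theory.
Import numFieldNormedType.Exports.
Local Open Scope ring_scope.

Section Defs.
Variables (R : realType) (d : nat) (E : finType).

Definition ebasis (l : 'I_d) : 'rV[R]_d := delta_mx 0 l.

(* the set V = {+-e_1,...,+-e_d}: a direction (l, true) is +e_l, (l, false) is -e_l *)
Definition dir := ('I_d * bool)%type.
Definition dvec (u : dir) : 'rV[R]_d :=
  if u.2 then ebasis u.1 else - ebasis u.1.

Definition eall : 'rV[R]_d := \sum_(l < d) ebasis l.

Definition dotv (a b : 'rV[R]_d) : R := \sum_(l < d) a 0 l * b 0 l.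
Definition sqnorm (a : 'rV[R]_d) : R := dotv a a.

Definition pospart (w : 'rV[R]_d) : 'rV[R]_d := \row_l Num.max (w 0 l) 0.
Definition negpart (w : 'rV[R]_d) : 'rV[R]_d := \row_l Num.max (- w 0 l) 0.

Fixpoint Ppow (P : E -> E -> R) (n : nat) : E -> E -> R :=
  match n with
  | 0 => fun i j => if i == j then 1 else 0
  | n'.+1 => fun i j => \sum_(k : E) Ppow P n' i k * P k j
  end.

Definition stochastic (P : E -> E -> R) :=
  (forall i j, 0 <= P i j) /\ (forall i, \sum_(j : E) P i j = 1).

Definition irreducible (P : E -> E -> R) :=
  forall i j, exists n, 0 < Ppow P n i j.

Definition aperiodic (P : E -> E -> R) :=
  forall i, forall q : nat,
    (forall n, (0 < n)%N -> 0 < Ppow P n i i -> (q %| n)%N) -> q = 1%N.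

Definition invariant_prob (P : E -> E -> R) (mu : E -> R) :=
  (forall i, 0 <= mu i) /\ \sum_(i : E) mu i = 1 /\
  (forall j, \sum_(i : E) mu i * P i j = mu j).

Definition C2_bounded (f : 'rV[R]_d -> R) :=
  (forall i x, derivable f x (ebasis i)) /\
  (forall i j x, derivable ('D_(ebasis i) f) x (ebasis j)) /\
  (forall i, continuous ('D_(ebasis i) f)) /\
  (forall i j, continuous ('D_(ebasis j) ('D_(ebasis i) f))) /\
  (exists M : R, forall i j x,
      `|'D_(ebasis i) f x| <= M /\ `|'D_(ebasis j) ('D_(ebasis i) f) x| <= M).

Definition kernel_ok (p : E -> 'rV[R]_d -> dir -> R) :=
  (forall k y u, 0 <= p k y u) /\ (forall k y, \sum_(u : dir) p k y u = 1).

Variable p : E -> 'rV[R]_d -> dir -> R.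

Definition gdrift (k : E) (y : 'rV[R]_d) : 'rV[R]_d :=
  \sum_(u : dir) p k y u *: dvec u.

Definition vcorr (P : E -> E -> R) (i : E) (y : 'rV[R]_d) : 'rV[R]_d :=
  limn (fun N => \sum_(0 <= n < N) \sum_(j : E) Ppow P n i j *: gdrift j y).

Definition qrefl (k : E) (y : 'rV[R]_d) (u : dir) : R :=
  let l := u.1 in
  if y 0 l == 1 then
    (if u.2 then 0 else p k y (l, true) + p k y (l, false))
  else if y 0 l == 0 then
    (if u.2 then p k y (l, true) + p k y (l, false) else 0)
  else p k y u.

Definition hdrift (k : E) (y : 'rV[R]_d) : 'rV[R]_d :=
  \sum_(u : dir) qrefl k y u *: dvec u.

Definition cm (P : E -> E -> R) (m : nat) (i : E) (y : 'rV[R]_d) : 'rV[R]_d :=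
  \sum_(u : dir) qrefl i y u *:
    ((vcorr P i (y + (m%:R)^-1 *: dvec u) - gdrift i (y + (m%:R)^-1 *: dvec u))
     - (vcorr P i y - gdrift i y)).

(* admissible trajectory of the chain (xi_n, R_n): R_0 = 0 and every
   transition has positive probability P(xi_n,xi_{n+1}) q(xi_n,R_n/m,u) *)
Definition admissible (P : E -> E -> R) (m : nat)
    (xi : nat -> E) (Rw : nat -> 'rV[R]_d) :=
  Rw 0%N = 0 /\
  forall n, exists u : dir,
    Rw n.+1 = Rw n + dvec u /\
    0 < P (xi n) (xi n.+1) * qrefl (xi n) ((m%:R)^-1 *: Rw n) u.

Definition Zinc (P : E -> E -> R) (m : nat)
    (xi : nat -> E) (Rw : nat -> 'rV[R]_d) (n : nat) : 'rV[R]_d :=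
  let y := (m%:R)^-1 *: Rw n in
  Rw n.+1 + vcorr P (xi n.+1) ((m%:R)^-1 *: Rw n.+1)
  - (Rw n + vcorr P (xi n) y + (hdrift (xi n) y - gdrift (xi n) y)
     + cm P m (xi n) y).

End Defs.

From HB Require Import structures.
From mathcomp Require Import all_boot all_order all_algebra.
From mathcomp Require Import all_classical all_reals all_analysis.
From mathcomp Require Import zify ring lra.
Set Implicit Arguments. Unset Strict Implicit. Unset Printing Implicit Defensive.
Import Order.TTheory GRing.Theory Num.Theory.
Import numFieldNormedType.Exports.
Local Open Scope ring_scope.

(* Put [F_k = |R_k - R_n|^2 + 2 <R_k - R_n, v(xi_k, R_k / m)>].  Expanding the
   definition of [Z_{k+1}] with [R_{k+1} = R_k + u], the increment
   [F_{k+1} - F_k - 2 <R_k - R_n, Z_{k+1}>] equals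
   [|u|^2 + 2 <u, v_{k+1}> + 2 <R_k - R_n, c^(m)_k> + 2 <R_k - R_n, (h - g)_k>].
   The first three terms are bounded uniformly in [m]: [|v| <= K] because some
   power [P^N] is positive, so by Doeblin's contraction [P^n g] decays
   geometrically; and [|c^(m)| <= L / m] because [v - g] is Lipschitz in [y],
   while [|R_k - R_n| <= m] since the walk stays in the box [[0, m]^d].  The
   reflected drift [h - g] only acts on the faces of the box, where
   [<R_k - R_n, h - g> = - <m e - R_n, (h - g)^-> - <R_n, (h - g)^+>].
   Summing over [p <= k < q] and trading [F] for [|R - R_n|^2] at both ends,
   at a cost [O(m)], gives the inequality. *)

Section MatrixPowers.
Variables (R : realType) (E : finType) (P : E -> E -> R).

Lemma PpowD a b i j :
  Ppow P (a + b) i j = \sum_k Ppow P a i k * Ppow P b k j.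
Proof.
elim: b i j => [|b IH] i j.
  rewrite addn0 /= (bigD1 j) //= eqxx mulr1 big1 ?addr0 // => k /negPf.
  by rewrite eq_sym => ->; rewrite mulr0.
rewrite addnS /=.
under eq_bigr => k _ do rewrite IH mulr_suml.
rewrite exchange_big /=; apply: eq_bigr => k _.
by rewrite mulr_sumr; apply: eq_bigr => l _; rewrite mulrA.
Qed.

Lemma Ppow1 i j : Ppow P 1 i j = P i j.
Proof.
rewrite /= (bigD1 i) //= eqxx mul1r big1 ?addr0 // => k /negPf.
by rewrite eq_sym => ->; rewrite mul0r.
Qed.

Lemma invariant_Ppow mu : invariant_prob P mu ->
  forall n j, \sum_i mu i * Ppow P n i j = mu j.
Proof.
case=> _ [_ mu_inv] n; elim: n => [|n IH] j /=.
  rewrite (bigD1 j) //= eqxx mulr1 big1 ?addr0 // => k /negPf ->.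
  by rewrite mulr0.
under eq_bigr => i _ do rewrite mulr_sumr.
rewrite exchange_big /= -[RHS]mu_inv; apply: eq_bigr => k _.
by rewrite -IH mulr_suml; apply: eq_bigr => i _; rewrite mulrA.
Qed.

Hypothesis P_stoch : stochastic P.

Lemma Ppow_ge0 n i j : 0 <= Ppow P n i j.
Proof.
elim: n i j => [|n IH] i j /=; first by case: eqP.
by apply: sumr_ge0 => k _; apply: mulr_ge0 => //; case: P_stoch.
Qed.

Lemma sum_Ppow n i : \sum_j Ppow P n i j = 1.
Proof.
elim: n i => [|n IH] i /=.
  by rewrite (bigD1 i) //= eqxx big1 ?addr0 // => j /negPf; rewrite eq_sym => ->.
rewrite exchange_big /= -[RHS](IH i); apply: eq_bigr => k _.
by rewrite -mulr_sumr; case: P_stoch => _ ->; rewrite mulr1.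
Qed.

Lemma PpowD_gt0 a b i k j :
  0 < Ppow P a i k -> 0 < Ppow P b k j -> 0 < Ppow P (a + b) i j.
Proof.
move=> Paik Pbkj; rewrite PpowD (bigD1 k) //=.
apply: ltr_pwDl; first exact: mulr_gt0.
by apply: sumr_ge0 => l _; apply: mulr_ge0; apply: Ppow_ge0.
Qed.

End MatrixPowers.

Section AdditiveSemigroup.
Variable S : nat -> Prop.
Hypothesis S0 : S 0.
Hypothesis SD : forall a b, S a -> S b -> S (a + b)%N.

Lemma semigroupM q a : S a -> S (q * a)%N.
Proof. by move=> Sa; elim: q => [|q IH]; [rewrite mul0n | rewrite mulSn; apply: SD]. Qed.

(* Every [n >= y * y] is a combination of [y] and [y + 1]. *)
Lemma semigroup_consecutive_cofinite y :
  S y -> S y.+1 -> exists N0, forall n, (N0 <= n)%N -> S n.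
Proof.
move=> Sy Sy1; have [y0|y_gt0] := posnP y.
  by exists 0%N => n _; rewrite -[n]muln1; apply: semigroupM; rewrite -y0.
exists (y * y)%N => n le_yy_n.
have -> : n = ((n %/ y - n %% y) * y + n %% y * y.+1)%N.
  have lt_mod : (n %% y < y)%N by rewrite ltn_pmod.
  have le_div : (y <= n %/ y)%N by rewrite leq_divRL.
  rewrite mulnBl mulnSr {1}(divn_eq n y).
  have : (n %% y * y <= n %/ y * y)%N.
    by rewrite leq_mul2r (leq_trans (ltnW lt_mod)) ?orbT.
  lia.
by apply: SD; apply: semigroupM.
Qed.

(* The least positive gap [x - y] between elements of [S] divides every positive
   [s] in [S], since [s %% d0] is again such a gap; so it is [1]. *)
Lemma semigroup_gcd1_cofinite :
  (exists2 s, (0 < s)%N & S s) ->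
  (forall q, (forall n, (0 < n)%N -> S n -> (q %| n)%N) -> q = 1%N) ->
  exists N0, forall n, (N0 <= n)%N -> S n.
Proof.
move=> [s s_gt0 Ss] gcd1.
pose gap k := exists x y, [/\ S x, S y & x = (y + k)%N].
have ex_gap : exists k, (0 < k)%N && `[< gap k >].
  by exists s; rewrite s_gt0; apply/asboolP; exists s, 0%N.
have [d0 /andP[d0_gt0 /asboolP [x [y [Sx Sy def_x]]]] d0_min] := ex_minnP ex_gap.
suff d0_1 : d0 = 1%N.
  by apply: (semigroup_consecutive_cofinite Sy); rewrite def_x d0_1 addn1 in Sx.
apply: gcd1 => t _ St; apply/dvdnP; exists (t %/ d0)%N.
have [mod0|mod_gt0] := posnP (t %% d0)%N.
  by rewrite {1}(divn_eq t d0) mod0 addn0.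
have : (d0 <= t %% d0)%N.
  apply: d0_min; rewrite mod_gt0; apply/asboolP.
  exists (t + t %/ d0 * y)%N, (t %/ d0 * x)%N; split.
  - by apply: SD => //; apply: semigroupM.
  - exact: semigroupM.
  - rewrite def_x {1}(divn_eq t d0) mulnDr; lia.
by rewrite leqNgt ltn_pmod.
Qed.

End AdditiveSemigroup.

Section PrimitiveMatrix.
Variables (R : realType) (E : finType) (P : E -> E -> R).
Hypotheses (P_stoch : stochastic P) (P_irr : irreducible P) (P_aper : aperiodic P).

Lemma Ppow_return_gt0 i : exists2 s, (0 < s)%N & 0 < Ppow P s i i.
Proof.
have [j Pij] : exists j, 0 < P i j.
  apply/not_existsP => P_row0.
  have : \sum_j P i j = 0.
    apply: big1 => j _; apply/eqP; rewrite eq_le; case: P_stoch => -> _.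
    by rewrite andbT leNgt; apply/negP => /(P_row0 j).
  by case: P_stoch => _ ->; move/eqP; rewrite oner_eq0.
have [n Pnji] := P_irr j i.
by exists (1 + n)%N => //; apply: (PpowD_gt0 P_stoch (k := j)); rewrite ?Ppow1.
Qed.

Lemma Ppow_diag_cofinite i : exists N0, forall n, (N0 <= n)%N -> 0 < Ppow P n i i.
Proof.
apply: (@semigroup_gcd1_cofinite (fun n => 0 < Ppow P n i i)).
- by rewrite /= eqxx ltr01.
- by move=> a b; apply: PpowD_gt0.
- exact: Ppow_return_gt0.
- exact: P_aper.
Qed.

Lemma Ppow_uniform_gt0 : exists N, forall i j, 0 < Ppow P N i j.
Proof.
have [N0 HN0] := choice Ppow_diag_cofinite.
have [nf Hnf] := choice (fun ij : E * E => P_irr ij.1 ij.2).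
pose A := (\max_i N0 i)%N; pose B := (\max_(ij : E * E) nf ij)%N.
exists (A + B)%N => i j.
have le_nf : (nf (i, j) <= B)%N by apply: (leq_bigmax (i, j)).
have le_N0 : (N0 i <= A)%N by apply: (leq_bigmax i).
rewrite -(subnK (leq_trans le_nf (leq_addl A B))).
apply: (PpowD_gt0 P_stoch (k := i)); last exact: (Hnf (i, j)).
by apply: HN0; lia.
Qed.

End PrimitiveMatrix.

Section Oscillation.
Variables (R : realType) (E : finType).

Definition osc (x : E -> R) : R := \big[Num.max/0]_(ii : E * E) (x ii.1 - x ii.2).

Lemma osc_ge0 x : 0 <= osc x.
Proof. exact: bigmax_ge_id. Qed.

Lemma le_osc x i i' : x i - x i' <= osc x.
Proof. exact: (le_bigmax 0 (fun ii : E * E => x ii.1 - x ii.2) (i, i')). Qed.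

Lemma osc_le x o : 0 <= o -> (forall i i', x i - x i' <= o) -> osc x <= o.
Proof. by move=> o_ge0 xo; apply: bigmax_le => // -[i i'] _; apply: xo. Qed.

(* Doeblin: after removing [delta] from every entry, each row of [Q] keeps
   the mass [1 - #|E| delta], and the removed part averages all rows alike. *)
Lemma osc_doeblin (Q : E -> E -> R) (delta : R) (x : E -> R) :
  (forall a b, delta <= Q a b) -> (forall a, \sum_b Q a b = 1) ->
  osc (fun a => \sum_b Q a b * x b) <= (1 - #|E|%:R * delta) * osc x.
Proof.
move=> Q_ge Q_sum1; set rho := 1 - _ * _.
have sum_excess a : \sum_b (Q a b - delta) = rho.
  by rewrite sumrB Q_sum1 sumr_const -mulr_natl.
have split_mean a : \sum_b Q a b * x b =
    \sum_b (Q a b - delta) * x b + delta * \sum_b x b.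
  by rewrite mulr_sumr -big_split /=; apply: eq_bigr => b _; rewrite mulrBl subrK.
have [i _|E0] := pickP (xpredT : pred E); last first.
  have card0 : #|E| = 0%N by apply: eq_card0 => a; have := E0 a.
  rewrite /rho card0 mul0r subr0 mul1r.
  by apply: osc_le (osc_ge0 x) _ => a; have := E0 a.
have rho_ge0 : 0 <= rho.
  by rewrite -(sum_excess i) sumr_ge0 // => b _; rewrite subr_ge0.
have [kM _ x_le_kM] := @arg_maxP _ _ _ i xpredT x isT.
have [km _ x_ge_km] := @arg_minP _ _ _ i xpredT x isT.
apply: osc_le => [|a a']; first by rewrite mulr_ge0 ?osc_ge0.
rewrite !split_mean [X in _ - X]addrC addrKA.
have upper : \sum_b (Q a b - delta) * x b <= rho * x kM.
  rewrite -(sum_excess a) mulr_suml ler_sum // => b _.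
  by rewrite ler_wpM2l ?subr_ge0 //; apply: x_le_kM.
have lower : rho * x km <= \sum_b (Q a' b - delta) * x b.
  rewrite -(sum_excess a') mulr_suml ler_sum // => b _.
  by rewrite ler_wpM2l ?subr_ge0 //; apply: x_ge_km.
apply: le_trans (_ : rho * x kM - rho * x km <= _); first exact: lerB.
by rewrite -mulrBr ler_wpM2l ?le_osc.
Qed.

End Oscillation.

Lemma sum_le_periodic_contraction (R : realType) (o : nat -> R) (rho : R) (N : nat) :
  (forall n, 0 <= o n <= 1) -> (forall n, o (N + n)%N <= rho * o n) ->
  0 <= rho < 1 -> forall M, \sum_(0 <= n < M) o n <= N%:R / (1 - rho).
Proof.
move=> o01 o_contr /andP[rho_ge0 rho_lt1] M.
have o_ge0 n : 0 <= o n by case/andP: (o01 n).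
have sum_mono K : \sum_(0 <= n < M) o n <= \sum_(0 <= n < K + M) o n.
  rewrite [X in _ <= X](big_cat_nat (n := M)) //= ?leq_addl // lerDl.
  by apply: sumr_ge0 => n _.
have sum_shift : \sum_(0 <= n < N + M) o n =
    \sum_(0 <= n < N) o n + \sum_(0 <= n < M) o (N + n)%N.
  rewrite (big_cat_nat (n := N)) //= ?leq_addr //; congr (_ + _).
  by rewrite -{1}[N]add0n big_addn addKn; apply: eq_bigr => n _; rewrite addnC.
have head_le : \sum_(0 <= n < N) o n <= N%:R.
  apply: le_trans (_ : \sum_(0 <= n < N) (1 : R) <= _).
    by apply: ler_sum => n _; case/andP: (o01 n).
  by rewrite sumr_const_nat subn0.
have tail_le : \sum_(0 <= n < M) o (N + n)%N <= rho * \sum_(0 <= n < N + M) o n.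
  apply: le_trans (_ : rho * \sum_(0 <= n < M) o n <= _).
    by rewrite mulr_sumr ler_sum.
  by rewrite ler_wpM2l.
rewrite ler_pdivlMr ?subr_gt0 //.
apply: le_trans (_ : (\sum_(0 <= n < N + M) o n) * (1 - rho) <= _).
  by rewrite ler_pM2r ?subr_gt0.
rewrite sum_shift in tail_le *; nra.
Qed.

Definition PpowF (R : realType) (E : finType) (P : E -> E -> R) n (f : E -> R) i : R :=
  \sum_j Ppow P n i j * f j.

Section Mixing.
Variables (R : realType) (E : finType) (P : E -> E -> R) (mu : E -> R).
Hypotheses (P_stoch : stochastic P) (mu_inv : invariant_prob P mu).
Variable N : nat.
Hypothesis PN_gt0 : forall i j, 0 < Ppow P N i j.

Definition minPN : R := \big[Num.min/1]_(ik : E * E) Ppow P N ik.1 ik.2.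
Definition rhoN : R := 1 - #|E|%:R * minPN.
Definition Kmix : R := #|E|%:R * (N%:R / (1 - rhoN)).

Lemma card_state_gt0 : (0 < #|E|)%N.
Proof.
case: mu_inv => _ [mu_sum1 _]; apply/card_gt0P.
apply/not_existsP => E0; move: mu_sum1; rewrite big1 => [/eqP|i _].
  by rewrite eq_sym oner_eq0.
by have := E0 i.
Qed.

Lemma minPN_gt0 : 0 < minPN.
Proof. by apply: lt_bigmin => // -[i k] _; apply: PN_gt0. Qed.

Lemma minPN_le i k : minPN <= Ppow P N i k.
Proof. exact: (bigmin_le 1 (i, k) (fun ik : E * E => Ppow P N ik.1 ik.2)). Qed.

Lemma rhoN_ge0 : 0 <= rhoN.
Proof.
have [i _] := card_gt0P card_state_gt0.
rewrite subr_ge0 -[X in _ <= X](sum_Ppow P_stoch N i).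
apply: le_trans (_ : \sum_(k : E) minPN <= _); first by rewrite sumr_const mulr_natl.
by apply: ler_sum => k _; apply: minPN_le.
Qed.

Lemma rhoN_lt1 : rhoN < 1.
Proof. by rewrite ltrBlDr ltrDl mulr_gt0 ?ltr0n ?card_state_gt0 ?minPN_gt0. Qed.

Lemma Kmix_ge0 : 0 <= Kmix.
Proof. by rewrite mulr_ge0 ?divr_ge0 // subr_ge0 ltW ?rhoN_lt1. Qed.

Lemma osc_PpowS n j : osc (Ppow P (1 + n) ^~ j) <= osc (Ppow P n ^~ j).
Proof.
have := @osc_doeblin R E P 0 (Ppow P n ^~ j) (proj1 P_stoch) (proj2 P_stoch).
rewrite mulr0 subr0 mul1r; congr (osc _ <= _); apply: funext => i.
by rewrite PpowD; apply: eq_bigr => k _; rewrite Ppow1.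
Qed.

Lemma osc_PpowN n j : osc (Ppow P (N + n) ^~ j) <= rhoN * osc (Ppow P n ^~ j).
Proof.
have := @osc_doeblin R E (Ppow P N) minPN (Ppow P n ^~ j) minPN_le (sum_Ppow P_stoch N).
by congr (osc _ <= _); apply: funext => i; rewrite PpowD.
Qed.

Lemma osc_Ppow_le1 n j : osc (Ppow P n ^~ j) <= 1.
Proof.
elim: n => [|n IH]; last by apply: le_trans IH; rewrite -add1n; apply: osc_PpowS.
apply: osc_le => // i i' /=.
by case: eqP; case: eqP; rewrite ?subrr ?subr0 ?sub0r ?lerN10.
Qed.

Lemma dist_Ppow_invariant n i j : `|Ppow P n i j - mu j| <= osc (Ppow P n ^~ j).
Proof.
have [mu_ge0 [mu_sum1 _]] := mu_inv.
have mu_mean (c : R) : c = \sum_i' mu i' * c by rewrite -mulr_suml mu_sum1 mul1r.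
rewrite -(invariant_Ppow mu_inv n j) ler_norml; apply/andP; split.
- rewrite lerNl opprB [X in _ - X <= _]mu_mean [X in _ <= X]mu_mean -sumrB.
  by apply: ler_sum => i' _; rewrite -mulrBr ler_wpM2l //; apply: (le_osc (Ppow P n ^~ j)).
- rewrite [X in X - _ <= _]mu_mean [X in _ <= X]mu_mean -sumrB.
  by apply: ler_sum => i' _; rewrite -mulrBr ler_wpM2l //; apply: (le_osc (Ppow P n ^~ j)).
Qed.

Lemma sum_osc_Ppow_le j M :
  \sum_(0 <= n < M) osc (Ppow P n ^~ j) <= N%:R / (1 - rhoN).
Proof.
apply: sum_le_periodic_contraction => [n||].
- by rewrite osc_ge0 osc_Ppow_le1.
- by move=> n /=; apply: osc_PpowN.
- by rewrite rhoN_ge0 rhoN_lt1.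
Qed.

Section CenteredSeries.
Variables (f : E -> R) (lam : R) (i : E).
Hypotheses (lam_ge0 : 0 <= lam) (f_le : forall j, `|f j| <= lam).
Hypothesis f_centered : \sum_j mu j * f j = 0.

Lemma norm_PpowF_le n : `|PpowF P n f i| <= lam * \sum_j osc (Ppow P n ^~ j).
Proof.
have -> : PpowF P n f i = \sum_j (Ppow P n i j - mu j) * f j.
  rewrite /PpowF; under [RHS]eq_bigr => j _ do rewrite mulrBl.
  by rewrite sumrB f_centered subr0.
apply: le_trans (ler_norm_sum _ _ _) _.
rewrite mulr_sumr; apply: ler_sum => j _; rewrite normrM mulrC.
by apply: ler_pM; rewrite ?normr_ge0 ?f_le ?dist_Ppow_invariant.
Qed.

Lemma normed_series_PpowF_le n : [normed series (fun k => PpowF P k f i)] n <= lam * Kmix.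
Proof.
rewrite /series /=.
apply: le_trans (_ : \sum_(0 <= k < n) (lam * \sum_j osc (Ppow P k ^~ j)) <= _).
  by apply: ler_sum => k _; apply: norm_PpowF_le.
rewrite -mulr_sumr ler_wpM2l // exchange_big /=.
apply: le_trans (_ : \sum_(j : E) (N%:R / (1 - rhoN)) <= _).
  by apply: ler_sum => j _; apply: sum_osc_Ppow_le.
by rewrite sumr_const /Kmix [X in _ <= X]mulr_natl; apply: lexx.
Qed.

Lemma cvg_normed_series_PpowF : cvgn [normed series (fun n => PpowF P n f i)].
Proof.
apply: nondecreasing_is_cvgn.
  by apply: nondecreasing_series => k _ _; apply: normr_ge0.
by exists (lam * Kmix) => _ [n _ <-]; apply: normed_series_PpowF_le.
Qed.

Lemma cvg_series_PpowF : cvgn (series (fun n => PpowF P n f i)).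
Proof. exact: normed_cvg cvg_normed_series_PpowF. Qed.

Lemma norm_lim_series_PpowF_le : `|limn (series (fun n => PpowF P n f i))| <= lam * Kmix.
Proof.
apply: le_trans (lim_series_norm cvg_normed_series_PpowF) _.
apply: limr_le; first exact: cvg_normed_series_PpowF.
by apply: nearW => n; apply: normed_series_PpowF_le.
Qed.

End CenteredSeries.
End Mixing.

Section Coordinates.
Variables (R : realType) (d : nat).
Local Open Scope classical_set_scope.

Lemma ebasis_coord (l l' : 'I_d) : ebasis R l 0 l' = (l == l')%:R.
Proof. by rewrite /ebasis mxE eqxx andTb eq_sym. Qed.

Lemma dvec_coord (u : dir d) l :
  dvec R u 0 l = if u.1 == l then (if u.2 then 1 else -1) else 0.
Proof.
rewrite /dvec /ebasis; case: u => l0 [] /=; rewrite !mxE eqxx andTb eq_sym;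
  by case: eqP => //=; rewrite oppr0.
Qed.

Lemma norm_dvec_coord_le1 (u : dir d) l : `|dvec R u 0 l| <= 1.
Proof. by rewrite dvec_coord; case: ifP; case: u.2; rewrite ?normrN ?normr1 ?normr0. Qed.

Lemma eall_coord l : eall R d 0 l = 1.
Proof.
rewrite /eall summxE (bigD1 l) //= big1 => [|l' /negPf l'_neq].
  by rewrite ebasis_coord eqxx addr0.
by rewrite ebasis_coord l'_neq.
Qed.

Lemma dvecE (u : dir d) : dvec R u = (if u.2 then 1 else -1) *: ebasis R u.1.
Proof. by rewrite /dvec; case: u.2; rewrite ?scale1r ?scaleN1r. Qed.

Lemma sum_dir (F : dir d -> R) :
  \sum_(u : dir d) F u = \sum_(l < d) (F (l, true) + F (l, false)).
Proof.
rewrite (eq_bigr (fun l => \sum_(b : bool) F (l, b))) => [|l _]; last first.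
  by rewrite big_bool.
by rewrite pair_bigA /=; apply: eq_bigr => -[l b].
Qed.

Lemma drift_coord (w : dir d -> R) l :
  (\sum_(u : dir d) w u *: dvec R u) 0 l = w (l, true) - w (l, false).
Proof.
rewrite summxE sum_dir (bigD1 l) // big1 /= => [|l' /negPf l'_neq].
  by rewrite ![(_ *: dvec R _) 0 l]mxE !dvec_coord /= eqxx mulr1 mulrN1 !addr0.
by rewrite ![(_ *: dvec R _) 0 l]mxE !dvec_coord /= l'_neq !mulr0 addr0.
Qed.

Lemma row_ebasis_expansion (A : 'rV[R]_d) : A = \sum_(l < d) A 0 l *: ebasis R l.
Proof.
apply/matrixP => i j; rewrite (ord1 i) summxE (bigD1 j) //= big1 => [|l /negPf l_neq].
  by rewrite addr0 mxE ebasis_coord eqxx mulr1.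
by rewrite mxE ebasis_coord l_neq mulr0.
Qed.

Lemma limn_coord (S : nat -> 'rV[R]_d) :
  (forall l, cvgn (fun n => S n 0 l)) ->
  forall l, limn S 0 l = limn (fun n => S n 0 l).
Proof.
move=> cvg_coord l.
have cvgS : S @ \oo --> \sum_(l' < d) limn (fun n => S n 0 l') *: ebasis R l'.
  have expandS : (fun n => \sum_(l' < d) S n 0 l' *: ebasis R l') = S.
    by apply: funext => n; rewrite -row_ebasis_expansion.
  rewrite -[X in X @ \oo]expandS.
  apply: cvg_big => [|l' _]; first exact: add_continuous.
  by apply: cvgZr_tmp; exact: cvg_coord.
rewrite (cvg_lim _ cvgS) // summxE (bigD1 l) //= big1 => [|l' /negPf l'_neq].
  by rewrite addr0 mxE ebasis_coord eqxx mulr1.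
by rewrite mxE ebasis_coord l'_neq mulr0.
Qed.

(* The mean value theorem applied to [s |-> f (y + s e_l)]. *)
Lemma lipschitz_along_ebasis (f : 'rV[R]_d -> R) (M : R) l :
  (forall x, derivable f x (ebasis R l)) ->
  (forall x, `|'D_(ebasis R l) f x| <= M) ->
  forall y t, `|f (y + t *: ebasis R l) - f y| <= M * `|t|.
Proof.
move=> f_der f_D_le y t.
pose e := ebasis R l; pose h s := f (y + s *: e).
have h_quot s : (fun r : R => r^-1 *: ((h \o shift s) (r *: 1) - h s)) =
    (fun r => r^-1 *: ((f \o shift (y + s *: e)) (r *: e) - f (y + s *: e))).
  apply: funext => r /=; rewrite /h /shift /=; congr (_ *: (f _ - _)).
  by rewrite [r *: 1]mulr1 scalerDl addrCA addrC.
have h_der s : derivable h s 1 by rewrite /derivable h_quot; apply: f_der.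
have h_D s : 'D_1 h s = 'D_e f (y + s *: e) by rewrite /derive h_quot.
have h_lip a b : a <= b -> `|h b - h a| <= M * (b - a).
  move=> le_ab; have [c _ ->] := MVT_segment le_ab
    (fun x _ => derivableP (h_der x))
    (derivable_within_continuous (fun x _ => h_der x)).
  have ba_ge0 : 0 <= b - a by rewrite subr_ge0.
  by rewrite normrM (ger0_norm ba_ge0) ler_wpM2r // h_D.
have -> : f (y + t *: e) - f y = h t - h 0 by rewrite /h scale0r addr0.
have [t_ge0|t_lt0] := leP 0 t.
  by rewrite (ger0_norm t_ge0); have := h_lip 0 t t_ge0; rewrite subr0.
by rewrite distrC (ltr0_norm t_lt0); have := h_lip t 0 (ltW t_lt0); rewrite sub0r.
Qed.

End Coordinates.

Section Drifts.
Variables (R : realType) (d : nat) (E : finType) (P : E -> E -> R) (mu : E -> R).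
Variable p : E -> 'rV[R]_d -> dir d -> R.
Hypotheses (P_stoch : stochastic P) (mu_inv : invariant_prob P mu) (p_ker : kernel_ok p).
Hypothesis g_centered : forall y, \sum_(k : E) mu k *: gdrift p k y = 0.
Variable N : nat.
Hypothesis PN_gt0 : forall i j, 0 < Ppow P N i j.
Variable M0 : R.
Hypothesis M0_ge0 : 0 <= M0.
Hypothesis p_der : forall k u l y, derivable (fun y => p k y u) y (ebasis R l).
Hypothesis p_D_le : forall k u l y, `|'D_(ebasis R l) (fun y => p k y u) y| <= M0.

Lemma gdrift_coord k y l : gdrift p k y 0 l = p k y (l, true) - p k y (l, false).
Proof. exact: drift_coord. Qed.

Lemma norm_gdrift_coord_le1 k y l : `|gdrift p k y 0 l| <= 1.
Proof.
case: p_ker => p_ge0 p_sum1; rewrite gdrift_coord.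
have pair_le1 : p k y (l, true) + p k y (l, false) <= 1.
  rewrite -(p_sum1 k y) sum_dir (bigD1 l) //= lerDl.
  by apply: sumr_ge0 => l' _; apply: addr_ge0.
have := p_ge0 k y (l, true); have := p_ge0 k y (l, false).
rewrite ler_norml; lra.
Qed.

Lemma gdrift_coord_lipschitz k y l l' t :
  `|gdrift p k (y + t *: ebasis R l') 0 l - gdrift p k y 0 l| <= 2 * M0 * `|t|.
Proof.
have p_lip u := lipschitz_along_ebasis (@p_der k u l') (@p_D_le k u l') y t.
have := p_lip (l, true); have := p_lip (l, false); rewrite !gdrift_coord.
set a := p k _ (l, true); set b := p k y (l, true).
set c := p k _ (l, false); set e := p k y (l, false).
have -> : a - c - (b - e) = (a - b) - (c - e) by ring.
by move=> ce_le ab_le; apply: le_trans (ler_normB _ _) _; lra.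
Qed.

Lemma gdrift_coord_centered y l : \sum_j mu j * gdrift p j y 0 l = 0.
Proof.
have := congr1 (fun A : 'rV[R]_d => A 0 l) (g_centered y).
rewrite /= summxE [X in _ = X -> _]mxE => sum0; rewrite -[X in _ = X]sum0.
by apply: eq_bigr => j _; rewrite mxE.
Qed.

Lemma cvg_series_gdrift_coord i y l :
  cvgn (series (fun n => PpowF P n (fun j => gdrift p j y 0 l) i)).
Proof.
apply: (cvg_series_PpowF P_stoch mu_inv PN_gt0 (lam := 1)) => // [j|].
- exact: norm_gdrift_coord_le1.
- exact: gdrift_coord_centered.
Qed.

Lemma vcorr_coord i y l :
  vcorr p P i y 0 l = limn (series (fun n => PpowF P n (fun j => gdrift p j y 0 l) i)).
Proof.
have series_coord l0 :
    (fun n => (\sum_(0 <= k < n) \sum_j Ppow P k i j *: gdrift p j y) 0 l0)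
    = series (fun n => PpowF P n (fun j => gdrift p j y 0 l0) i).
  apply: funext => n; rewrite /series /= summxE; apply: eq_bigr => k _.
  by rewrite /PpowF summxE; apply: eq_bigr => j _; rewrite mxE.
rewrite /vcorr limn_coord ?series_coord // => l'.
by rewrite series_coord; apply: cvg_series_gdrift_coord.
Qed.

Lemma norm_vcorr_coord_le i y l : `|vcorr p P i y 0 l| <= Kmix P N.
Proof.
rewrite vcorr_coord -[Kmix P N]mul1r.
apply: (norm_lim_series_PpowF_le P_stoch mu_inv PN_gt0) => //.
- by move=> j; apply: norm_gdrift_coord_le1.
- exact: gdrift_coord_centered.
Qed.

Lemma vcorr_coord_lipschitz i y l l' t :
  `|vcorr p P i (y + t *: ebasis R l') 0 l - vcorr p P i y 0 l|
    <= Kmix P N * (2 * M0 * `|t|).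
Proof.
have cvg_y := @cvg_series_gdrift_coord i y l.
have cvg_shift := @cvg_series_gdrift_coord i (y + t *: ebasis R l') l.
rewrite !vcorr_coord -limB //.
set f1 := fun j => gdrift p j (y + t *: ebasis R l') 0 l.
set f2 := fun j => gdrift p j y 0 l.
have -> : series (fun n => PpowF P n f1 i) - series (fun n => PpowF P n f2 i) =
          series (fun n => PpowF P n (fun j => f1 j - f2 j) i).
  apply: funext => n; rewrite /series /= !fctE -sumrB; apply: eq_bigr => k _.
  by rewrite /PpowF -sumrB; apply: eq_bigr => j _; rewrite mulrBr.
rewrite mulrC; apply: (norm_lim_series_PpowF_le P_stoch mu_inv PN_gt0).
- by rewrite !mulr_ge0.
- by move=> j; apply: gdrift_coord_lipschitz.
- under eq_bigr => j _ do rewrite mulrBr.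
  by rewrite sumrB !gdrift_coord_centered subrr.
Qed.

Lemma qrefl_ge0 k y u : 0 <= qrefl p k y u.
Proof.
case: p_ker => p_ge0 _; rewrite /qrefl.
by do 2?case: ifP => _; case: u.2; rewrite ?addr_ge0.
Qed.

Lemma sum_qrefl k y : \sum_u qrefl p k y u = 1.
Proof.
case: p_ker => _ p_sum1; rewrite -(p_sum1 k y) !sum_dir; apply: eq_bigr => l _.
by rewrite /qrefl /=; case: ifP => _; [rewrite add0r | case: ifP => _; rewrite ?addr0].
Qed.

Lemma reflection_coord k y l : (hdrift p k y - gdrift p k y) 0 l =
  if y 0 l == 1 then - (2 * p k y (l, true))
  else if y 0 l == 0 then 2 * p k y (l, false) else 0.
Proof.
rewrite !mxE /hdrift drift_coord gdrift_coord /qrefl /=.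
by do 2?case: ifP => _; ring.
Qed.

Definition lip_vg : R := 2 * M0 * (Kmix P N + 1).

Lemma norm_cm_coord_le i y (m : nat) l : (1 <= m)%N -> `|cm p P m i y 0 l| <= lip_vg / m%:R.
Proof.
move=> m_ge1; have m_gt0 : 0 < (m%:R : R) by rewrite ltr0n.
have shift_le (u : dir d) :
  `|((vcorr p P i (y + m%:R^-1 *: dvec R u) - gdrift p i (y + m%:R^-1 *: dvec R u))
     - (vcorr p P i y - gdrift p i y)) 0 l| <= lip_vg / m%:R.
  pose s : R := (if u.2 then 1 else -1) * m%:R^-1.
  have -> : y + m%:R^-1 *: dvec R u = y + s *: ebasis R u.1.
    by rewrite dvecE scalerA /s mulrC.
  have norm_s : `|s| = m%:R^-1.
    by rewrite /s normrM; case: u.2; rewrite ?normrN normr1 mul1r ger0_norm ?invr_ge0 ?ltW.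
  have := vcorr_coord_lipschitz i y l u.1 s; have := gdrift_coord_lipschitz i y l u.1 s.
  rewrite !mxE norm_s => g_lip v_lip.
  have -> : forall a b c e : R, a + - c + - (b + - e) = (a - b) - (c - e).
    by move=> *; ring.
  apply: le_trans (ler_normB _ _) _.
  have -> : lip_vg / m%:R = Kmix P N * (2 * M0 * m%:R^-1) + 2 * M0 * m%:R^-1.
    by rewrite /lip_vg; field; rewrite gt_eqF.
  exact: lerD.
rewrite /cm summxE; apply: le_trans (ler_norm_sum _ _ _) _.
apply: le_trans (_ : \sum_u qrefl p i y u * (lip_vg / m%:R) <= _); last first.
  by rewrite -mulr_suml sum_qrefl mul1r.
apply: ler_sum => u _; rewrite mxE normrM ger0_norm ?qrefl_ge0 //.
by rewrite ler_wpM2l ?qrefl_ge0 ?shift_le.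
Qed.

End Drifts.

Section Trajectory.
Variables (R : realType) (d : nat) (E : finType) (P : E -> E -> R).
Variable p : E -> 'rV[R]_d -> dir d -> R.
Variables (m : nat) (xi : nat -> E) (Rw : nat -> 'rV[R]_d).
Hypotheses (m_ge1 : (1 <= m)%N) (adm : admissible p P m xi Rw).

Local Notation y k := (m%:R^-1 *: Rw k).

Lemma natr_m_neq0 : m%:R != 0 :> R.
Proof. by rewrite pnatr_eq0 eqn0Ngt m_ge1. Qed.

Lemma scaled_coord_eq1 k l : y k 0 l = 1 -> Rw k 0 l = m%:R.
Proof.
rewrite mxE => /(congr1 (fun x => m%:R * x)).
by rewrite mulrA mulfV ?natr_m_neq0 // mul1r mulr1.
Qed.

Lemma scaled_coord_eq0 k l : y k 0 l = 0 -> Rw k 0 l = 0.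
Proof. by rewrite mxE => /eqP; rewrite mulf_eq0 invr_eq0 (negPf natr_m_neq0) => /eqP. Qed.

Lemma qrefl_up_neq0 k z l : qrefl p k z (l, true) != 0 -> z 0 l != 1.
Proof. by rewrite /qrefl /=; case: ifP => [_|/negbT //]; rewrite eqxx. Qed.

Lemma qrefl_down_neq0 k z l : qrefl p k z (l, false) != 0 -> z 0 l != 0.
Proof.
rewrite /qrefl /=; case: ifP => [/eqP -> _|_]; first by rewrite oner_eq0.
by case: ifP => [_|/negbT //]; rewrite eqxx.
Qed.

Lemma admissible_coord_nat k l : exists2 r : nat, (r <= m)%N & Rw k 0 l = r%:R.
Proof.
case: adm => R0 adm_step; elim: k => [|k [r le_rm Rkl]].
  by exists 0%N => //; rewrite R0 mxE.
have [[l' b] [-> /lt0r_neq0]] := adm_step k; rewrite mulf_eq0 negb_or => /andP[_].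
rewrite mxE dvec_coord /=; case: (l' =P l) => [->|_] q_neq0; last by exists r; rewrite ?addr0.
have y_coordE : y k 0 l = r%:R / m%:R by rewrite mxE Rkl mulrC.
case: b q_neq0 => [/qrefl_up_neq0|/qrefl_down_neq0] y_neq.
  exists r.+1; last by rewrite Rkl natr1.
  rewrite ltn_neqAle le_rm andbT; apply: contra y_neq => /eqP r_m.
  by rewrite y_coordE r_m divff ?natr_m_neq0.
have r_gt0 : (0 < r)%N.
  by rewrite lt0n; apply: contra y_neq => /eqP r0; rewrite y_coordE r0 mul0r.
exists r.-1; first by rewrite (leq_trans (leq_pred r)).
by rewrite Rkl -{1}(prednK r_gt0) -natr1 addrK.
Qed.

Lemma admissible_coord_bounds k l : 0 <= Rw k 0 l <= m%:R.
Proof. by have [r le_rm ->] := admissible_coord_nat k l; rewrite ler0n ler_nat. Qed.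

Lemma norm_coord_sub_le k n l : `|Rw k 0 l - Rw n 0 l| <= m%:R.
Proof.
have /andP[Rk_ge0 Rk_le] := admissible_coord_bounds k l.
have /andP[Rn_ge0 Rn_le] := admissible_coord_bounds n l.
by rewrite ler_norml; apply/andP; split; lra.
Qed.

(* [h - g] vanishes off the faces [R_k,l = 0] and [R_k,l = m], on which it equals
   [(h - g)^+] resp. [- (h - g)^-]. *)
Lemma reflection_balance (ker_ge0 : forall k z u, 0 <= p k z u) k n l :
  let w := (hdrift p (xi k) (y k) - gdrift p (xi k) (y k)) 0 l in
  (Rw k 0 l - Rw n 0 l) * w + (m%:R - Rw n 0 l) * Num.max (- w) 0
    + Rw n 0 l * Num.max w 0 = 0.
Proof.
rewrite /= reflection_coord; case: ifP => [/eqP/scaled_coord_eq1 ->|_].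
  have := ker_ge0 (xi k) (y k) (l, true).
  rewrite opprK => p_ge0; rewrite (@max_l _ _ (2 * _)) ?mulr_ge0 //.
  by rewrite (@max_r _ _ (- _)) ?oppr_le0 ?mulr_ge0 //; ring.
case: ifP => [/eqP/scaled_coord_eq0 ->|_]; last by rewrite oppr0 maxxx; ring.
have := ker_ge0 (xi k) (y k) (l, false) => p_ge0.
rewrite (@max_l _ _ (2 * _)) ?mulr_ge0 //.
by rewrite (@max_r _ _ (- _)) ?oppr_le0 ?mulr_ge0 //; ring.
Qed.

End Trajectory.

Section Telescoping.
Variables (R : realType) (d : nat) (E : finType) (P : E -> E -> R) (mu : E -> R).
Variable p : E -> 'rV[R]_d -> dir d -> R.
Hypotheses (P_stoch : stochastic P) (mu_inv : invariant_prob P mu) (p_ker : kernel_ok p).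
Hypothesis g_centered : forall y, \sum_(k : E) mu k *: gdrift p k y = 0.
Variable N : nat.
Hypothesis PN_gt0 : forall i j, 0 < Ppow P N i j.
Variable M0 : R.
Hypothesis M0_ge0 : 0 <= M0.
Hypothesis p_der : forall k u l y, derivable (fun y => p k y u) y (ebasis R l).
Hypothesis p_D_le : forall k u l y, `|'D_(ebasis R l) (fun y => p k y u) y| <= M0.
Variables (m : nat) (xi : nat -> E) (Rw : nat -> 'rV[R]_d).
Hypotheses (m_ge1 : (1 <= m)%N) (adm : admissible p P m xi Rw).

Local Notation y k := (m%:R^-1 *: Rw k).
Local Notation v k := (vcorr p P (xi k) (y k)).
Local Notation hg k := (hdrift p (xi k) (y k) - gdrift p (xi k) (y k)).

Definition corrected_sqdist n k : R :=
  \sum_(l < d) ((Rw k 0 l - Rw n 0 l) ^+ 2 + 2 * (Rw k 0 l - Rw n 0 l) * v k 0 l).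

Definition step_bound : R := d%:R * (1 + 2 * Kmix P N + 2 * lip_vg P N M0).

Lemma corrected_sqdist_step n k :
  corrected_sqdist n k.+1 - corrected_sqdist n k
    + 2 * (dotv (m%:R *: eall R d - Rw n) (negpart (hg k)) + dotv (Rw n) (pospart (hg k))
           - dotv (Rw k - Rw n) (Zinc p P m xi Rw k))
  <= step_bound.
Proof.
have [u [Rk1 _]] := adm.2 k.
have -> : Zinc p P m xi Rw k =
    Rw k.+1 + v k.+1 - (Rw k + v k + hg k + cm p P m (xi k) (y k)) by [].
have balance l := reflection_balance xi Rw m_ge1 (proj1 p_ker) k n l.
have v_le l := norm_vcorr_coord_le P_stoch mu_inv p_ker g_centered PN_gt0 (xi k.+1) (y k.+1) l.
have c_le l := norm_cm_coord_le P_stoch mu_inv p_ker g_centered PN_gt0 M0_ge0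
  p_der p_D_le (xi k) (y k) l m_ge1.
move: balance v_le c_le; rewrite /corrected_sqdist /dotv /step_bound.
set H := hdrift p _ _; set G := gdrift p _ _; set c := cm p P m _ _.
set V1 := vcorr p P (xi k.+1) _; set V0 := vcorr p P (xi k) _.
clearbody H G c V1 V0 => balance v_le c_le.
rewrite -!sumrB -big_split /= -sumrB mulr_sumr -big_split /=.
have -> : d%:R * (1 + 2 * Kmix P N + 2 * lip_vg P N M0) =
          \sum_(l < d) (1 + 2 * Kmix P N + 2 * lip_vg P N M0).
  by rewrite sumr_const card_ord mulr_natl.
apply: ler_sum => l _.
have Rk1_coord : Rw k.+1 0 l = Rw k 0 l + dvec R u 0 l by rewrite Rk1 mxE.
have u_le := norm_dvec_coord_le1 R u l.
have a_le := norm_coord_sub_le m_ge1 adm k n l.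
have {balance} := balance l; rewrite /= !mxE eall_coord mulr1 Rk1_coord.
set uu := dvec R u 0 l in u_le *; set a := Rw k 0 l - Rw n 0 l in a_le *.
have uu_sq_le1 : uu ^+ 2 <= 1 by rewrite -real_normK ?num_real // exprn_ile1.
have uv_le : uu * V1 0 l <= Kmix P N.
  rewrite (le_trans (ler_norm _)) // normrM -[Kmix P N]mul1r.
  by rewrite ler_pM ?normr_ge0.
have ac_le : a * c 0 l <= lip_vg P N M0.
  rewrite (le_trans (ler_norm _)) // normrM -[lip_vg P N M0](@divfK _ m%:R) ?natr_m_neq0 //.
  by rewrite mulrC ler_pM ?normr_ge0.
move=> balance; rewrite /a in balance ac_le *; lra.
Qed.

Lemma corrected_sqdist_close n k :
  `|corrected_sqdist n k - sqnorm (Rw k - Rw n)| <= 2 * d%:R * m%:R * Kmix P N.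
Proof.
have -> : sqnorm (Rw k - Rw n) = \sum_(l < d) (Rw k 0 l - Rw n 0 l) ^+ 2.
  by apply: eq_bigr => l _; rewrite !mxE expr2.
have -> : 2 * d%:R * m%:R * Kmix P N = \sum_(l < d) 2 * (m%:R * Kmix P N).
  by rewrite sumr_const card_ord -mulr_natl; ring.
rewrite /corrected_sqdist -sumrB; apply: le_trans (ler_norm_sum _ _ _) _.
apply: ler_sum => l _; rewrite addrC addKr -mulrA normrM ger0_norm // ler_wpM2l //.
rewrite normrM ler_pM ?normr_ge0 ?(norm_coord_sub_le m_ge1 adm) //.
exact: (norm_vcorr_coord_le P_stoch mu_inv p_ker g_centered PN_gt0).
Qed.

Lemma sqdist_telescoped n p0 q : (p0 <= q)%N ->
  sqnorm (Rw q - Rw n)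
    + 2 * (\sum_(p0 <= k < q) dotv (m%:R *: eall R d - Rw n) (negpart (hg k)))
    + 2 * (\sum_(p0 <= k < q) dotv (Rw n) (pospart (hg k)))
  <= sqnorm (Rw p0 - Rw n) + (step_bound + 4 * d%:R * Kmix P N) * ((q - p0)%:R + m%:R)
    + 2 * (\sum_(p0 <= k < q) dotv (Rw k - Rw n) (Zinc p P m xi Rw k)).
Proof.
move=> le_pq.
have := @ler_sum_nat _ p0 q _ _ (fun k _ => corrected_sqdist_step n k).
rewrite big_split /= telescope_sumr // -mulr_sumr sumr_const_nat.
rewrite !sumrB big_split /= -[step_bound *+ _]mulr_natl natrB //.
have := corrected_sqdist_close n q; have := corrected_sqdist_close n p0.
rewrite !ler_norml => /andP[close_p0 close_p0'] /andP[close_q close_q'].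
have Kmix_ge0 := Kmix_ge0 mu_inv PN_gt0.
have step_bound_ge0 : 0 <= step_bound.
  have lip_vg_ge0 : 0 <= lip_vg P N M0 by rewrite /lip_vg !mulr_ge0 // addr_ge0.
  by rewrite /step_bound mulr_ge0 // !addr_ge0 // mulr_ge0.
have qp_ge0 : 0 <= q%:R - p0%:R :> R by rewrite subr_ge0 ler_nat.
have := mulr_ge0 (mulr_ge0 (ler0n R d) Kmix_ge0) qp_ge0.
have := mulr_ge0 step_bound_ge0 (ler0n R m).
lra.
Qed.

End Telescoping.

Lemma C2_bounded_uniform_D (R : realType) (d : nat) (I : finType)
    (f : I -> 'rV[R]_d -> R) :
  (forall i, C2_bounded (f i)) ->
  exists2 M, 0 <= M & forall i l y, `|'D_(ebasis R l) (f i) y| <= M.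
Proof.
move=> f_C2.
have bounded_D i : exists M : R, forall l y, `|'D_(ebasis R l) (f i) y| <= M.
  case: (f_C2 i) => _ [_ [_ [_ [M M_bound]]]].
  by exists M => l y; case: (M_bound l l y).
have [Mf Mf_bound] := choice bounded_D.
exists (\sum_i `|Mf i|) => [|i l y]; first by rewrite sumr_ge0.
apply: le_trans (Mf_bound i l y) (le_trans (ler_norm _) _).
by rewrite (bigD1 i) //= lerDl sumr_ge0.
Qed.

Theorem lemma5p2 (R : realType) (d : nat) (E : finType)
    (P : E -> E -> R) (mu : E -> R) (p : E -> 'rV[R]_d -> dir d -> R) :
  (0 < d)%N ->
  stochastic P -> irreducible P -> aperiodic P -> invariant_prob P mu ->
  kernel_ok p ->
  (forall k u, C2_bounded (fun y => p k y u)) ->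
  (forall y, \sum_(k : E) mu k *: gdrift p k y = 0) ->
  exists C : R, forall (m : nat) (xi : nat -> E) (Rw : nat -> 'rV[R]_d)
                       (n p0 q : nat),
    (1 <= m)%N -> (1 <= n)%N -> (n <= p0)%N -> (p0 <= q)%N ->
    admissible p P m xi Rw ->
    let y k := (m%:R)^-1 *: Rw k in
    let hg k := hdrift p (xi k) (y k) - gdrift p (xi k) (y k) in
    sqnorm (Rw q - Rw n)
      + 2 * (\sum_(p0 <= k < q) dotv (m%:R *: eall R d - Rw n) (negpart (hg k)))
      + 2 * (\sum_(p0 <= k < q) dotv (Rw n) (pospart (hg k)))
    <= sqnorm (Rw p0 - Rw n) + C * ((q - p0)%:R + m%:R)
      + 2 * (\sum_(p0 <= k < q) dotv (Rw k - Rw n) (Zinc p P m xi Rw k)).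
Proof.
move=> _ P_stoch P_irr P_aper mu_inv p_ker p_C2 g_centered.
have [N PN_gt0] := Ppow_uniform_gt0 P_stoch P_irr P_aper.
have p_der k u l y : derivable (fun y => p k y u) y (ebasis R l).
  by case: (p_C2 k u) => f_der _; apply: f_der.
have [M0 M0_ge0 D_le] := C2_bounded_uniform_D (fun ku : E * dir d => p_C2 ku.1 ku.2).
have p_D_le k u l y : `|'D_(ebasis R l) (fun y => p k y u) y| <= M0 := D_le (k, u) l y.
exists (step_bound d P N M0 + 4 * d%:R * Kmix P N).
move=> m xi Rw n p0 q m_ge1 _ _ le_pq adm.
exact: (sqdist_telescoped P_stoch mu_inv p_ker g_centered PN_gt0 M0_ge0 p_der p_D_le
  m_ge1 adm n le_pq).
Qed.
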